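(* Let $\mathcal{O}=(O_1,\ldots,O_n)$ be a chain and $2\le i\le n$. Let $r_i,r_{i-1}$ be the radii and $o_i,o_{i-1}$ the centers of $O_i,O_{i-1}$. Then $H_i=||o_io_{i-1}||$ and $V_i\ge|r_i-r_{i-1}|$.
   Context: All objects lie in the Euclidean plane; a ''circle'' means a closed disk; $||pq||$ is Euclidean distance. Chain. A sequence of distinct finite closed disks $(O_1,\ldots,O_n)$ is a chain if: (1) every two consecutive disks $O_i,O_{i+1}$ intersect; let $a_i,b_i$ be the common points of their boundary circles ($a_i=b_i$ if tangent), labelled so that all the $a_i$ lie on one side of the chain and all the $b_i$ on the other. Let $C_i^{(i+1)}$ be the arc of the boundary of $O_i$ lying in $O_{i+1}$ and $C_{i+1}^{(i)}$ the arc of the boundary of $O_{i+1}$ lying in $O_i$. (2) For $2\le i\le n-1$, the arcs $C_i^{(i-1)}$ and $C_i^{(i+1)}$ share no point other than a boundary point. For $2\le i\le n$, choose coordinates in which $o_{i-1},o_i$ lie on a horizontal line and $a_{i-1}$ is on or above that line. Let $q_{i-1}^{\rightarrow}$ (resp. $q_i^{\leftarrow}$) be the point of the upper boundary of $O_{i-1}$ (resp. $O_i$) farthest from the line $o_{i-1}o_i$. Let $Q_{i-1}^{\rightarrow}$ be the upper arc of the boundary of $O_{i-1}$ between $q_{i-1}^{\rightarrow}$ and $a_{i-1}$, and $Q_i^{\leftarrow}$ the upper arc of the boundary of $O_i$ between $q_i^{\leftarrow}$ and $a_{i-1}$. $Q_{i-1}^{\rightarrow}$ is colored red if it lies inside $O_i$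 and green otherwise; $Q_i^{\leftarrow}$ is red if it lies inside $O_{i-1}$ and green otherwise. Let $\mathcal{P}_i$ be the path from $q_{i-1}^{\rightarrow}$ to $q_i^{\leftarrow}$ formed by $Q_{i-1}^{\rightarrow}$ and $Q_i^{\leftarrow}$. $H_i$ (resp. $V_i$) is the horizontal (resp. vertical) distance traveled along $\mathcal{P}_i$, green arcs contributing positively and red arcs negatively. *)

From HB Require Import structures.
From mathcomp Require Import all_boot all_order all_algebra.
From mathcomp Require Import all_classical all_reals all_analysis.
Set Implicit Arguments. Unset Strict Implicit. Unset Printing Implicit Defensive.
Import Order.TTheory GRing.Theory Num.Theory.
Local Open Scope ring_scope.

Section Geo.
Variable R : realType.

Definition pt := (R * R)%type.
Definition padd (p q : pt) : pt := (p.1 + q.1, p.2 + q.2).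
Definition psub (p q : pt) : pt := (p.1 - q.1, p.2 - q.2).
Definition pscale (k : R) (p : pt) : pt := (k * p.1, k * p.2).
Definition dot (p q : pt) : R := p.1 * q.1 + p.2 * q.2.
Definition pdist (p q : pt) : R := Num.sqrt (dot (psub p q) (psub p q)).

Record disk := Disk { dcenter : pt ; dradius : R }.
Definition in_disk (O : disk) (p : pt) : Prop := pdist p (dcenter O) <= dradius O.
Definition on_bd (O : disk) (p : pt) : Prop := pdist p (dcenter O) = dradius O.

Definition arcC (Oi Oj : disk) (p : pt) : Prop := on_bd Oi p /\ in_disk Oj p.

Definition is_chain (n : nat) (O : nat -> disk) (a b : nat -> pt) : Prop :=
  (forall i, (1 <= i <= n)%N -> 0 < dradius (O i)) /\
  (forall i j, (1 <= i <= n)%N -> (1 <= j <= n)%N -> O i = O j -> i = j) /\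
  (forall i, (1 <= i < n)%N ->
     (exists p, in_disk (O i) p /\ in_disk (O i.+1) p) /\
     on_bd (O i) (a i) /\ on_bd (O i.+1) (a i) /\
     on_bd (O i) (b i) /\ on_bd (O i.+1) (b i) /\
     (forall p, on_bd (O i) p -> on_bd (O i.+1) p -> p = a i \/ p = b i)) /\
  (forall i, (2 <= i <= n.-1)%N -> forall p,
     arcC (O i) (O i.-1) p -> arcC (O i) (O i.+1) p ->
     on_bd (O i.-1) p \/ on_bd (O i.+1) p).

(* Coordinates: an orthonormal frame (u horizontal, w vertical) in which
   o1, o2 lie on a horizontal line and a is on or above that line. *)
Definition valid_frame (o1 o2 a u w : pt) : Prop :=
  (u = pscale (pdist o2 o1)^-1 (psub o2 o1) \/
   u = pscale (- (pdist o2 o1)^-1) (psub o2 o1)) /\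
  dot w w = 1 /\ dot u w = 0 /\ 0 <= dot (psub a o1) w.

(* upper boundary of the disk O, parametrized by t in [0, pi] *)
Definition arc_pt (O : disk) (u w : pt) (t : R) : pt :=
  padd (dcenter O) (padd (pscale (dradius O * cos t) u) (pscale (dradius O * sin t) w)).

(* parameter of a point p of the upper boundary of O *)
Definition ang (O : disk) (u : pt) (p : pt) : R :=
  acos (dot (psub p (dcenter O)) u / dradius O).

(* the arc Q of the upper boundary of O between its topmost point (parameter
   pi/2) and p corresponds to parameters in [qlo, qhi] *)
Definition qlo (O : disk) (u p : pt) : R := Num.min (pi / 2) (ang O u p).
Definition qhi (O : disk) (u p : pt) : R := Num.max (pi / 2) (ang O u p).

Definition red (O O' : disk) (u w p : pt) : Prop :=
  forall t, qlo O u p <= t <= qhi O u p -> in_disk O' (arc_pt O u w t).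

(* distance traveled along Q in direction e (total variation of the
   e-coordinate along the arc) *)
Definition travel (O : disk) (u w p e : pt) : \bar R :=
  total_variation (qlo O u p) (qhi O u p) (fun t => dot (arc_pt O u w t) e).

Definition contrib (O O' : disk) (u w p e : pt) : \bar R :=
  if `[< red O O' u w p >] then (- travel O u w p e)%E else travel O u w p e.

(* H_i and V_i for the pair (O_{i-1}, O_i) with a = a_{i-1}:
   path formed by Q_{i-1}^-> (on O_{i-1}) and Q_i^<- (on O_i) *)
Definition Hval (Oprev Ocur : disk) (u w a : pt) : \bar R :=
  (contrib Oprev Ocur u w a u + contrib Ocur Oprev u w a u)%E.
Definition Vval (Oprev Ocur : disk) (u w a : pt) : \bar R :=
  (contrib Oprev Ocur u w a w + contrib Ocur Oprev u w a w)%E.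

End Geo.

From HB Require Import structures.
From mathcomp Require Import all_boot all_order all_algebra.
From mathcomp Require Import all_classical all_reals all_analysis.
From mathcomp Require Import ring lra zify.
Set Implicit Arguments.
Unset Strict Implicit.
Unset Printing Implicit Defensive.
Import Order.TTheory GRing.Theory Num.Theory.
Local Open Scope ring_scope.

(* Take coordinates with the centres p, q of the two disks on the horizontal
   axis and the common boundary point a above it, so a = p + (X1, Y) = q + (X2, Y)
   with X1 - X2 = D := q - p (signed) and Y >= 0.  The arc of a circle of radius
   r from its top to a is monotone in both coordinates, so it travels |X|
   horizontally and r - Y vertically, and it is red exactly when its top lies in
   the other disk, i.e. when E X <= 0 for E the signed horizontal offset of the
   other centre (D or -D).  A sign analysis then gives
   H = |D| = ||pq||, and, using r_i^2 - r_(i-1)^2 = D^2 - 2 D X1,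
   V >= |r_i - r_(i-1)|. *)

Section Frame.
Variable R : realType.
Implicit Types (p q u w v e : pt R) (k : R).

Definition orthonormal u w := [/\ dot u u = 1, dot w w = 1 & dot u w = 0].

Lemma dotC p q : dot p q = dot q p.
Proof. by rewrite /dot mulrC [p.2 * _]mulrC. Qed.

Lemma dotBl p q e : dot (psub p q) e = dot p e - dot q e.
Proof. by rewrite /dot /=; ring. Qed.

Lemma dotZl k p q : dot (pscale k p) q = k * dot p q.
Proof. by rewrite /dot /=; ring. Qed.

Lemma dot_self_ge0 p : 0 <= dot p p.
Proof. by rewrite /dot addr_ge0 // -expr2 sqr_ge0. Qed.

Lemma dot_self_eq0 p : (dot p p == 0) = (p == (0, 0)).
Proof.
case: p => p1 p2; rewrite /dot /= -!expr2 paddr_eq0 ?sqr_ge0 //.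
by rewrite !sqrf_eq0 xpair_eqE.
Qed.

(* Parseval in an orthonormal frame of the plane: the three frame identities
   force [u u^T + w w^T = 1], each entry being a combination of them. *)
Lemma dot_self_frame v u w : orthonormal u w ->
  dot v v = dot v u ^+ 2 + dot v w ^+ 2.
Proof.
case: v u w => [v1 v2] [u1 u2] [w1 w2] []; rewrite /dot /= => hu hw huw.
have e11 : u1 ^+ 2 + w1 ^+ 2 = 1.
  have : u1 ^+ 2 + w1 ^+ 2 - 1 = (u1 * w1 - u2 * w2) * (u1 * w1 + u2 * w2)
      + (1 - w1 ^+ 2) * (u1 * u1 + u2 * u2 - 1) + u2 ^+ 2 * (w1 * w1 + w2 * w2 - 1).
    by ring.
  by rewrite hu hw huw !subrr !mulr0 !addr0 => /eqP; rewrite subr_eq0 => /eqP.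
have e22 : u2 ^+ 2 + w2 ^+ 2 = 1.
  have : u2 ^+ 2 + w2 ^+ 2 - 1 = (u2 * w2 - u1 * w1) * (u1 * w1 + u2 * w2)
      + (1 - w2 ^+ 2) * (u1 * u1 + u2 * u2 - 1) + u1 ^+ 2 * (w1 * w1 + w2 * w2 - 1).
    by ring.
  by rewrite hu hw huw !subrr !mulr0 !addr0 => /eqP; rewrite subr_eq0 => /eqP.
have e12 : u1 * u2 + w1 * w2 = 0.
  have -> : u1 * u2 + w1 * w2 = (u1 * w2 + u2 * w1) * (u1 * w1 + u2 * w2)
      - u1 * u2 * (w1 * w1 + w2 * w2 - 1) - w1 * w2 * (u1 * u1 + u2 * u2 - 1).
    by ring.
  by rewrite hu hw huw !subrr !mulr0 !subr0.
have -> : (v1 * u1 + v2 * u2) ^+ 2 + (v1 * w1 + v2 * w2) ^+ 2 =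
  v1 ^+ 2 * (u1 ^+ 2 + w1 ^+ 2) + 2 * v1 * v2 * (u1 * u2 + w1 * w2)
  + v2 ^+ 2 * (u2 ^+ 2 + w2 ^+ 2) by ring.
by rewrite e11 e22 e12; ring.
Qed.

Lemma pdist_ge0 p q : 0 <= pdist p q.
Proof. exact: sqrtr_ge0. Qed.

Lemma pdist_gt0 p q : p != q -> 0 < pdist p q.
Proof.
move=> pq; rewrite sqrtr_gt0 lt_def dot_self_ge0 andbT dot_self_eq0.
by apply: contra pq; case: p q => p1 p2 [q1 q2]; rewrite xpair_eqE !subr_eq0.
Qed.

Lemma sqr_pdist_frame u w p q : orthonormal u w ->
  pdist p q ^+ 2 = (dot p u - dot q u) ^+ 2 + (dot p w - dot q w) ^+ 2.
Proof.
by move=> huw; rewrite sqr_sqrtr ?dot_self_ge0 // (dot_self_frame _ huw) !dotBl.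
Qed.

Lemma pdist_le_sqr p q r : 0 <= r -> (pdist p q <= r) = (pdist p q ^+ 2 <= r ^+ 2).
Proof. by move=> r0; rewrite ler_sqr // nnegrE pdist_ge0. Qed.

Lemma arc_pt_u (O : disk R) u w t : orthonormal u w ->
  dot (arc_pt O u w t) u = dot (dcenter O) u + dradius O * cos t.
Proof.
case=> hu _ huw.
have -> : dot (arc_pt O u w t) u = dot (dcenter O) u
    + dradius O * cos t * dot u u + dradius O * sin t * dot u w.
  by rewrite /dot /arc_pt /=; ring.
by rewrite hu huw mulr1 mulr0 addr0.
Qed.

Lemma arc_pt_w (O : disk R) u w t : orthonormal u w ->
  dot (arc_pt O u w t) w = dot (dcenter O) w + dradius O * sin t.
Proof.
case=> _ hw huw.
have -> : dot (arc_pt O u w t) w = dot (dcenter O) w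
    + dradius O * cos t * dot u w + dradius O * sin t * dot w w.
  by rewrite /dot /arc_pt /=; ring.
by rewrite hw huw mulr1 mulr0 addr0.
Qed.

End Frame.

Section MonotoneVariation.
Variable R : realType.
Implicit Types (a b x y t K r : R) (f : R -> R).

Definition monotone_in a b f :=
  {in `[a, b] &, nondecreasing_fun f} \/ {in `[a, b] &, nonincreasing_fun f}.

Lemma monotone_in_addl a b f K :
  monotone_in a b f -> monotone_in a b (fun t => K + f t).
Proof.
by case=> mf; [left|right] => s t hs ht st; rewrite lerD2l mf.
Qed.

Lemma total_variation_monotone a b f : a <= b -> monotone_in a b f ->
  total_variation a b f = `|f b - f a|%:E.
Proof.
move=> ab mf; have [a_in b_in] : a \in `[a, b] /\ b \in `[a, b].
  by split; rewrite in_itv /= ?lexx ab.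
case: mf => [ndf|nif].
  by rewrite nondecreasing_total_variation // ger0_norm // subr_ge0 ndf.
rewrite -total_variationN nondecreasing_total_variation //=; last first.
  by move=> s t hs ht st; rewrite lerN2 nif.
by rewrite ler0_norm ?subr_le0 ?nif // opprB opprK addrC.
Qed.

Lemma total_variation_minmax x y f :
  monotone_in (Num.min x y) (Num.max x y) f ->
  total_variation (Num.min x y) (Num.max x y) f = `|f x - f y|%:E.
Proof.
case: (leP x y) => xy mf; rewrite total_variation_monotone ?(distrC (f y)) //.
exact: ltW.
Qed.

Lemma monotone_in_minmax_between x y f t :
  monotone_in (Num.min x y) (Num.max x y) f ->
  Num.min x y <= t <= Num.max x y ->
  (f x <= f t <= f y) \/ (f y <= f t <= f x).
Proof.
have mono_between a b : a <= b -> monotone_in a b f -> a <= t <= b ->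
    (f a <= f t <= f b) \/ (f b <= f t <= f a).
  move=> ab [mf|mf] /andP[ta tb]; [left|right];
    by rewrite !mf ?in_itv /= ?lexx ?ab ?ta ?tb.
case: (leP x y) => xy mf ht; first exact: mono_between.
by rewrite or_comm; apply: mono_between => //; rewrite ltW.
Qed.

Lemma cos_nonincreasing : {in `[0, pi] &, nonincreasing_fun (@cos R)}.
Proof.
move=> x y hx hy; rewrite le_eqVlt => /predU1P[-> // | xy].
by rewrite ltW // ltr_cos.
Qed.

Lemma sin_nondecreasing :
  {in `[- (pi / 2), pi / 2] &, nondecreasing_fun (@sin R)}.
Proof.
move=> x y hx hy; rewrite le_eqVlt => /predU1P[-> // | xy].
by rewrite ltW // ltr_sin.
Qed.

Lemma pihalf_itv : 0 <= (pi / 2 : R) <= pi.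
Proof. by have pi0 := @pi_gt0 R; apply/andP; split; lra. Qed.

Lemma monotone_in_cos a b r : 0 <= r -> 0 <= a -> b <= pi ->
  monotone_in a b (fun t => r * cos t).
Proof.
move=> r0 a0 bpi; right=> s t hs ht st.
have sub z : z \in `[a, b] -> z \in `[0, pi].
  by rewrite !in_itv /= => /andP[h1 h2]; rewrite (le_trans a0 h1) (le_trans h2 bpi).
by rewrite ler_wpM2l // cos_nonincreasing ?sub.
Qed.

Lemma monotone_in_sin x r : 0 <= r -> 0 <= x <= pi ->
  monotone_in (Num.min (pi / 2) x) (Num.max (pi / 2) x) (fun t => r * sin t).
Proof.
move=> r0 /andP[x0 xpi]; have /andP[pi0 pipi] := pihalf_itv.
case: (leP (pi / 2) x) => hx.
  right=> s t; rewrite !in_itv /= => /andP[hs1 hs2] /andP[ht1 ht2] st.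
  rewrite ler_wpM2l // -!cosBpihalf cos_nonincreasing ?lerD2r //.
    by rewrite in_itv /=; apply/andP; split; lra.
  by rewrite in_itv /=; apply/andP; split; lra.
left=> s t; rewrite !in_itv /= => /andP[hs1 hs2] /andP[ht1 ht2] st.
rewrite ler_wpM2l // sin_nondecreasing //.
  by rewrite in_itv /=; apply/andP; split; lra.
by rewrite in_itv /=; apply/andP; split; lra.
Qed.

End MonotoneVariation.

Section SignedSums.
Variable R : realFieldType.
Implicit Types (D X Y z : R).

Lemma mul_le_between D X z : D * X <= 0 -> (0 <= z <= X) \/ (X <= z <= 0) ->
  D * X <= D * z.
Proof. by move=> DX hz; have [D0|D0] := lerP 0 D; case: hz => /andP[z1 z2]; nra. Qed.

Lemma signed_norms_sum D (X1 X2 : R) : D != 0 -> X1 - X2 = D ->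
  (if D * X1 <= 0 then - `|X1| else `|X1|) +
  (if - D * X2 <= 0 then - `|X2| else `|X2|) = `|D|.
Proof.
move=> + hX; rewrite neq_lt => /orP[D0|D0];
  [rewrite (ltr0_norm D0)|rewrite (gtr0_norm D0)];
(have [x1|x1] := lerP 0 X1; [rewrite (ger0_norm x1)|rewrite (ltr0_norm x1)]);
(have [x2|x2] := lerP 0 X2; [rewrite (ger0_norm x2)|rewrite (ltr0_norm x2)]);
(case: ifP => h1; case: ifP => h2);
try (move/negbT: h1; rewrite -ltNge => h1); try (move/negbT: h2; rewrite -ltNge => h2);
nra.
Qed.

Lemma signed_heights_sum_ge D (X1 X2 r1 r2 : R) Y : 0 < r1 -> 0 < r2 -> 0 <= Y ->
  X1 ^+ 2 + Y ^+ 2 = r1 ^+ 2 -> X2 ^+ 2 + Y ^+ 2 = r2 ^+ 2 ->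
  D != 0 -> X1 - X2 = D ->
  `|r2 - r1| <= (if D * X1 <= 0 then - (r1 - Y) else r1 - Y) +
                (if - D * X2 <= 0 then - (r2 - Y) else r2 - Y).
Proof.
move=> r10 r20 hY h1 h2 hD hX.
have Yr1 : Y <= r1 by nra.
have Yr2 : Y <= r2 by nra.
have hr : r2 ^+ 2 - r1 ^+ 2 = D * D - 2 * (D * X1) by rewrite -h1 -h2 -hX; ring.
have DD : 0 < D * D by rewrite -expr2 exprn_even_gt0.
rewrite ler_norml.
case: ifP => b1; case: ifP => b2;
try (move/negbT: b1; rewrite -ltNge => b1); try (move/negbT: b2; rewrite -ltNge => b2);
apply/andP; split; nra.
Qed.

End SignedSums.

Section UpperArc.
Variable R : realType.
Variables (O O' : disk R) (u w A : pt R).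
Hypotheses (huw : orthonormal u w) (r_gt0 : 0 < dradius O).
Hypotheses (A_bd : on_bd O A) (A_up : 0 <= dot (psub A (dcenter O)) w).

Local Notation r := (dradius O).
Local Notation X := (dot (psub A (dcenter O)) u).
Local Notation Y := (dot (psub A (dcenter O)) w).
Local Notation th := (ang O u A).

Lemma arc_end_sqr : X ^+ 2 + Y ^+ 2 = r ^+ 2.
Proof. by rewrite -A_bd (sqr_pdist_frame _ _ huw) !dotBl. Qed.

Lemma arc_end_bounds : -1 <= X / r <= 1 /\ Y <= r.
Proof.
have r0 := ltW r_gt0.
have [hX hY] : X ^+ 2 <= r ^+ 2 /\ Y ^+ 2 <= r ^+ 2.
  by rewrite -arc_end_sqr lerDl lerDr !sqr_ge0.
rewrite ler_pdivlMr // ler_pdivrMr // mulN1r mul1r -ler_norml; split.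
  by rewrite -(ler_sqr (normr_ge0 _) r0) real_normK ?num_real.
by rewrite -(ler_sqr A_up r0).
Qed.

Lemma ang_itv : 0 <= th <= pi.
Proof. by have [hX _] := arc_end_bounds; rewrite acos_ge0 // acos_lepi. Qed.

Lemma cos_ang : r * cos th = X.
Proof.
have [hX _] := arc_end_bounds.
by rewrite /ang acosK ?in_itv // mulrC divfK // gt_eqF.
Qed.

Lemma sin_ang : r * sin th = Y.
Proof.
have sin_ge0 : 0 <= r * sin th by rewrite mulr_ge0 ?sin_ge0_pi ?ang_itv // ltW.
apply/eqP; rewrite -(@eqrXn2 _ 2) //; apply/eqP.
have := arc_end_sqr; have := cos2Dsin2 th; rewrite -cos_ang => h1 h2.
by rewrite -[Y ^+ 2](addKr ((r * cos th) ^+ 2)) h2 -[r ^+ 2]mulr1 -h1; ring.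
Qed.

Lemma arc_params : 0 <= Num.min (pi / 2) th /\ Num.max (pi / 2) th <= pi.
Proof.
have /andP[pi0 pipi] := pihalf_itv R; have /andP[th0 thpi] := ang_itv.
by rewrite le_min ge_max pi0 th0 pipi thpi.
Qed.

Lemma travel_u : travel O u w A u = `|X|%:E.
Proof.
have [lo0 hipi] := arc_params.
rewrite /travel (_ : (fun t => _) = fun t => dot (dcenter O) u + r * cos t).
  rewrite total_variation_minmax; last first.
    by apply/monotone_in_addl/monotone_in_cos => //; exact: ltW.
  by rewrite cos_ang cos_pihalf mulr0 opprD addrACA subrr !add0r normrN.
by apply/funext => t; rewrite arc_pt_u.
Qed.

Lemma travel_w : travel O u w A w = (r - Y)%:E.
Proof.
have [_ Yr] := arc_end_bounds.
rewrite /travel (_ : (fun t => _) = fun t => dot (dcenter O) w + r * sin t).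
  rewrite total_variation_minmax; last first.
    by apply/monotone_in_addl/monotone_in_sin; [exact: ltW | exact: ang_itv].
  rewrite sin_ang sin_pihalf mulr1 opprD addrACA subrr add0r.
  by rewrite ger0_norm // subr_ge0.
by apply/funext => t; rewrite arc_pt_w.
Qed.

Lemma arc_cos_between t : qlo O u A <= t <= qhi O u A ->
  (0 <= r * cos t <= X) \/ (X <= r * cos t <= 0).
Proof.
move=> ht; have [lo0 hipi] := arc_params.
have := @monotone_in_minmax_between _ _ _ (fun t => r * cos t) _ _ ht.
rewrite cos_pihalf mulr0 cos_ang; apply; apply: monotone_in_cos => //; exact: ltW.
Qed.

Hypotheses (A_bd' : on_bd O' A).
Hypothesis centers_level : dot (psub (dcenter O') (dcenter O)) w = 0.

Local Notation D := (dot (psub (dcenter O') (dcenter O)) u).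

Lemma sqr_pdist_arc_pt t :
  pdist (arc_pt O u w t) (dcenter O') ^+ 2 = r ^+ 2 - 2 * D * (r * cos t) + D ^+ 2.
Proof.
rewrite (sqr_pdist_frame _ _ huw) !arc_pt_u // !arc_pt_w //.
move: centers_level; rewrite dotBl => /eqP; rewrite subr_eq0 => /eqP ->.
rewrite dotBl.
have -> : r ^+ 2 = r ^+ 2 * (cos t ^+ 2 + sin t ^+ 2) by rewrite cos2Dsin2 mulr1.
by ring.
Qed.

Lemma sqr_dradius_other : dradius O' ^+ 2 = r ^+ 2 - 2 * D * X + D ^+ 2.
Proof.
rewrite -A_bd' (sqr_pdist_frame _ _ huw) -arc_end_sqr !dotBl.
move: centers_level; rewrite dotBl => /eqP; rewrite subr_eq0 => /eqP ->; ring.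
Qed.

Lemma in_disk_arc_pt t : in_disk O' (arc_pt O u w t) <-> D * X <= D * (r * cos t).
Proof.
have r'0 : 0 <= dradius O' by rewrite -A_bd' pdist_ge0.
rewrite /in_disk pdist_le_sqr // sqr_pdist_arc_pt sqr_dradius_other.
by rewrite lerD2r lerD2l lerN2 -!mulrA ler_pM2l.
Qed.

(* The arc is inside [O'] iff its topmost point is: along the arc the
   horizontal offset [r cos t] runs monotonically from [0] to [X]. *)
Lemma redE : `[< red O O' u w A >] = (D * X <= 0).
Proof.
apply/asboolP/idP => [inside | DX].
  have := inside (pi / 2); rewrite /qlo /qhi ge_min le_max !lexx /=.
  by move=> /(_ isT)/in_disk_arc_pt; rewrite cos_pihalf !mulr0.
move=> t /arc_cos_between ht; apply/in_disk_arc_pt.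
exact: mul_le_between.
Qed.

Lemma contrib_u :
  contrib O O' u w A u = (if D * X <= 0 then - `|X| else `|X|)%:E.
Proof. by rewrite /contrib redE travel_u; case: ifP. Qed.

Lemma contrib_w :
  contrib O O' u w A w = (if D * X <= 0 then - (r - Y) else r - Y)%:E.
Proof. by rewrite /contrib redE travel_w; case: ifP. Qed.

End UpperArc.

Section Pair.
Variable R : realType.

Lemma valid_frame_coords (p q A u w : pt R) : p != q -> valid_frame p q A u w ->
  [/\ orthonormal u w, dot (psub q p) w = 0 & `|dot (psub q p) u| = pdist q p].
Proof.
move=> pq [hu [hw [huw _]]]; set d := pdist q p; set v := psub q p.
have d0 : 0 < d by rewrite pdist_gt0 // eq_sym.
have vv : dot v v = d ^+ 2 by rewrite sqr_sqrtr // dot_self_ge0.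
have [k [eu kd]] : exists k, u = pscale k v /\ `|k * d| = 1.
  by case: hu => ->; eexists; split; rewrite // ?mulNr ?normrN mulVf ?normr1 ?gt_eqF.
have k0 : k != 0.
  by apply/eqP => k0; move: kd; rewrite k0 mul0r normr0 => /eqP; rewrite eq_sym oner_eq0.
rewrite eu in huw *; split.
- split=> //; rewrite dotZl dotC dotZl vv mulrA -expr2 -exprMn.
  by rewrite -real_normK ?num_real // kd expr1n.
- by move: huw; rewrite dotZl => /eqP; rewrite mulf_eq0 (negbTE k0) => /eqP.
- by rewrite dotC dotZl vv expr2 mulrA normrM kd mul1r ger0_norm // ltW.
Qed.

Lemma on_bd_center_neq (P Q : disk R) (A : pt R) :
  on_bd P A -> on_bd Q A -> P <> Q -> dcenter P != dcenter Q.
Proof.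
case: P Q => [c r] [c' r']; rewrite /on_bd /= => <- <- PQ.
by apply/eqP => ec; apply: PQ; rewrite ec.
Qed.

Lemma Hval_Vval_pair (P Q : disk R) (A u w : pt R) :
  0 < dradius P -> 0 < dradius Q -> P <> Q -> on_bd P A -> on_bd Q A ->
  valid_frame (dcenter P) (dcenter Q) A u w ->
  Hval P Q u w A = (pdist (dcenter Q) (dcenter P))%:E /\
  (`|dradius Q - dradius P|%:E <= Vval P Q u w A)%E.
Proof.
move=> rP rQ PQ AP AQ hf.
have cPQ := on_bd_center_neq AP AQ PQ.
have [huw vw normD] := valid_frame_coords cPQ hf.
have [_ [_ [_ AupP]]] := hf.
have hY : dot (psub A (dcenter Q)) w = dot (psub A (dcenter P)) w.
  by move: vw; rewrite !dotBl; lra.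
have vw' : dot (psub (dcenter P) (dcenter Q)) w = 0 by move: vw; rewrite !dotBl; lra.
have AupQ : 0 <= dot (psub A (dcenter Q)) w by rewrite hY.
have hX : dot (psub A (dcenter P)) u - dot (psub A (dcenter Q)) u =
          dot (psub (dcenter Q) (dcenter P)) u by rewrite !dotBl; ring.
have hD : dot (psub (dcenter P) (dcenter Q)) u = - dot (psub (dcenter Q) (dcenter P)) u.
  by rewrite !dotBl; ring.
have D0 : dot (psub (dcenter Q) (dcenter P)) u != 0.
  by rewrite -normr_eq0 normD gt_eqF // pdist_gt0 // eq_sym.
rewrite /Hval /Vval !contrib_u // !contrib_w // hD -!EFinD; split.
  by rewrite -normD signed_norms_sum.
rewrite lee_fin hY; apply: signed_heights_sum_ge => //; first exact: arc_end_sqr.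
by rewrite -hY arc_end_sqr.
Qed.

End Pair.

Unset Implicit Arguments.

Theorem fact2 (R : realType) (n : nat) (O : nat -> disk R) (a b : nat -> pt R)
  (i : nat) (u w : pt R) :
  is_chain n O a b -> (2 <= i <= n)%N ->
  valid_frame (dcenter (O i.-1)) (dcenter (O i)) (a i.-1) u w ->
  Hval (O i.-1) (O i) u w (a i.-1) = (pdist (dcenter (O i)) (dcenter (O i.-1)))%:E /\
  (`|dradius (O i) - dradius (O i.-1)|%:E <= Vval (O i.-1) (O i) u w (a i.-1))%E.
Proof.
move=> [pos [inj [meet _]]] /andP[i2 iN].
have [_ [AP [AQ _]]] := meet i.-1 (ltac:(lia)).
rewrite prednK in AQ; last by lia.
apply: Hval_Vval_pair => //; [apply: pos; lia | apply: pos; lia |].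
by move=> e; have := inj i.-1 i (ltac:(lia)) (ltac:(lia)) e; lia.
Qed.
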